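(* Let $A$ be a noetherian commutative $\mathbb N$-graded ring, $\mathfrak m=A_+$, and $I=(a_1,\dots,a_n)$ an ideal of $A$ with $\mathrm{depth}_{\mathfrak m}(A)>\mathrm{depth}_I(A)$. Then $H^0_{\mathfrak m}\big(H_{n-\mathrm{depth}_I(A)}(\mathbf a;A)\big)=0$, where $H_\bullet(\mathbf a;A)$ is the Koszul homology of $a_1,\dots,a_n$ over $A$.
   Context: $H^0_{\mathfrak m}(N)=\{x\in N:\exists m,\ \mathfrak m^mx=0\}$. $\mathrm{depth}_{\mathfrak a}(A)$ is the grade of the ideal $\mathfrak a$ on $A$. *)

From mathcomp Require Import all_boot all_order all_algebra.
Set Implicit Arguments. Unset Strict Implicit. Unset Printing Implicit Defensive.
Import GRing.Theory.
Local Open Scope ring_scope.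

Section Defs.
Variable A : comNzRingType.

Definition is_ideal (P : A -> Prop) : Prop :=
  P 0 /\ (forall x y, P x -> P y -> P (x + y)) /\ (forall r x, P x -> P (r * x)).

Definition noetherian : Prop :=
  forall J : nat -> A -> Prop, (forall k, is_ideal (J k)) ->
    (forall k x, J k x -> J k.+1 x) ->
    exists N, forall k x, (N <= k)%N -> J k x -> J N x.

Definition ideal_gen (s : seq A) (x : A) : Prop :=
  exists c : nat -> A, x = \sum_(i < size s) c i * s`_i.

Definition is_Ngrading (G : nat -> A -> Prop) : Prop :=
  (forall i, G i 0 /\ (forall x y, G i x -> G i y -> G i (x - y))) /\
  (forall i j x y, G i x -> G j y -> G (i + j)%N (x * y)) /\
  (forall x, exists (f : nat -> A) (N : nat),
      (forall i, G i (f i)) /\ x = \sum_(i < N) f i) /\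
  (forall (f : nat -> A) (N : nat), (forall i, G i (f i)) ->
      \sum_(i < N) f i = 0 -> forall i, (i < N)%N -> f i = 0).

Definition Aplus (G : nat -> A -> Prop) (x : A) : Prop :=
  exists (f : nat -> A) (N : nat),
    (forall i, G i (f i)) /\ f 0%N = 0 /\ x = \sum_(i < N) f i.

Definition regular_seq_in (I : A -> Prop) (s : seq A) : Prop :=
  (forall i, (i < size s)%N -> I s`_i) /\
  (forall i, (i < size s)%N -> forall y,
      ideal_gen (take i s) (s`_i * y) -> ideal_gen (take i s) y) /\
  ~ ideal_gen s 1.

Definition grade_ge (I : A -> Prop) (k : nat) : Prop :=
  exists s, size s = k /\ regular_seq_in I s.

(* grade of a proper ideal I on A equals d (maximal length of a regular
   sequence in I); the unit ideal has grade infinity and is excluded *)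
Definition grade_eq (I : A -> Prop) (d : nat) : Prop :=
  ~ I 1 /\ grade_ge I d /\ ~ grade_ge I d.+1.

Definition prod_ideal (P Q : A -> Prop) (x : A) : Prop :=
  exists (N : nat) (p q : nat -> A),
    (forall i, P (p i)) /\ (forall i, Q (q i)) /\ x = \sum_(i < N) p i * q i.

Definition ideal_pow (P : A -> Prop) (t : nat) : A -> Prop :=
  iter t (prod_ideal P) (fun _ => True).

(* Koszul complex K(a;A): chains are A-valued functions on subsets of 'I_n
   (coefficients w.r.t. the basis e_S of the exterior algebra), with
   d(e_S) = sum_{j in S} (-1)^{#{i in S | i < j}} a_j e_{S \ j}. *)
Definition kchain (n : nat) (k : nat) (x : {ffun {set 'I_n} -> A}) : Prop :=
  forall T : {set 'I_n}, #|T| != k -> x T = 0.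

Definition kdiff (n : nat) (a : 'I_n -> A) (x : {ffun {set 'I_n} -> A})
  : {ffun {set 'I_n} -> A} :=
  [ffun T : {set 'I_n} => \sum_(j | j \notin T)
      (-1) ^+ #|[set i in T | (i < j)%N]| * a j * x (j |: T)].

Definition kcycle (n : nat) (a : 'I_n -> A) (k : nat) x : Prop :=
  kchain k x /\ kdiff a x = 0.

Definition kboundary (n : nat) (a : 'I_n -> A) (k : nat) x : Prop :=
  exists y, kchain k.+1 y /\ x = kdiff a y.

Definition kscale (n : nat) (y : A) (x : {ffun {set 'I_n} -> A})
  : {ffun {set 'I_n} -> A} := [ffun T => y * x T].

End Defs.

(* Let x be an A-regular sequence of length d in I = (a) and y one of length
   d + 1 in m.  Multiplication by x_i sends a Koszul j-cycle w modulo (x_<i)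
   to a (j+1)-cycle z modulo (x_<=i), and w is a boundary as soon as z is,
   because x_i is regular.  For j = n - d + i depth sensitivity gives
   H_(j+1)(a; A/(x_<i)) = 0, so z inherits the m-torsion of w.  Climbing to
   i = d, an m-torsion class of H_(n-d)(a; A) becomes an element u of
   H_n(a; A/(x)) = ((x) : I)/(x) with m^t u in (x).  Such u lies in (x): the
   ideal (a, y) contains a regular sequence longer than x, so the same Koszul
   argument gives ((x) : (a, y)) = (x), and induction on t concludes. *)

From mathcomp Require Import all_boot all_order all_algebra ring zify.
Set Implicit Arguments. Unset Strict Implicit. Unset Printing Implicit Defensive.
Import GRing.Theory.
Local Open Scope ring_scope.

Lemma sumr_antisym (R : zmodType) (N : nat) (F : 'I_N -> 'I_N -> R) :
  (forall j k, F j k + F k j = 0) -> (forall j, F j j = 0) ->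
  \sum_j \sum_k F j k = 0.
Proof.
move=> FN F0; rewrite pair_bigA /= (bigID (fun p : 'I_N * 'I_N => (p.1 < p.2)%N)) /=.
rewrite [X in _ + X](bigID (fun p : 'I_N * 'I_N => (p.2 < p.1)%N)) /=.
rewrite [X in _ + (_ + X)]big1 ?addr0; last first.
  case=> j k /= /andP[]; rewrite -!leqNgt => le_kj le_jk.
  by have /eqP -> : j == k by rewrite -(inj_eq val_inj) eqn_leq le_jk le_kj.
have swap_inj : injective (fun p : 'I_N * 'I_N => (p.2, p.1)) by case=> ? ? [] ? ? [] -> ->.
rewrite [X in _ + X](reindex_inj swap_inj) /=.
rewrite [X in _ + X](eq_bigl (fun p : 'I_N * 'I_N => (p.1 < p.2)%N)); last first.
  by case=> j k /=; case: ltngtP.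
by rewrite -big_split /= big1 // => p _; apply: FN.
Qed.

Section IdealGen.
Variable A : comNzRingType.
Implicit Types (s : seq A) (c u v : A).

Lemma ideal_gen0 s : ideal_gen s 0.
Proof. by exists (fun _ => 0); rewrite big1 // => i _; rewrite mul0r. Qed.

Lemma ideal_genD s u v : ideal_gen s u -> ideal_gen s v -> ideal_gen s (u + v).
Proof.
case=> c -> [e ->]; exists (fun i => c i + e i).
by rewrite -big_split /=; apply: eq_bigr => i _; rewrite mulrDl.
Qed.

Lemma ideal_genMl s r u : ideal_gen s u -> ideal_gen s (r * u).
Proof.
case=> c ->; exists (fun i => r * c i).
by rewrite mulr_sumr; apply: eq_bigr => i _; rewrite mulrA.
Qed.

Lemma ideal_genMr s r u : ideal_gen s u -> ideal_gen s (u * r).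
Proof. by rewrite mulrC; apply: ideal_genMl. Qed.

Lemma ideal_genN s u : ideal_gen s u -> ideal_gen s (- u).
Proof. by rewrite -mulN1r; apply: ideal_genMl. Qed.

Lemma ideal_genB s u v : ideal_gen s u -> ideal_gen s v -> ideal_gen s (u - v).
Proof. by move=> Iu Iv; apply: ideal_genD => //; apply: ideal_genN. Qed.

Lemma ideal_gen_sum s (I : finType) (P : pred I) (F : I -> A) :
  (forall i, P i -> ideal_gen s (F i)) -> ideal_gen s (\sum_(i | P i) F i).
Proof.
by move=> IF; apply: (big_ind (ideal_gen s)) => //; [apply: ideal_gen0 | apply: ideal_genD].
Qed.

Lemma ideal_gen_nil u : ideal_gen [::] u <-> u = 0.
Proof. by split=> [[c ->]|->]; [rewrite big_ord0 | apply: ideal_gen0]. Qed.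

Lemma ideal_gen_rcons s c u :
  ideal_gen (rcons s c) u <-> exists w v, ideal_gen s w /\ u = w + c * v.
Proof.
have sumE (e : nat -> A) : \sum_(i < size (rcons s c)) e i * (rcons s c)`_i =
    \sum_(i < size s) e i * s`_i + c * e (size s).
  rewrite size_rcons big_ord_recr /= nth_rcons ltnn eqxx mulrC; congr (_ + _).
  by apply: eq_bigr => i _; rewrite nth_rcons ltn_ord.
split=> [[e ->]|[w [v [[e ->] ->]]]].
  by rewrite sumE; exists (\sum_(i < size s) e i * s`_i), (e (size s)); split=> //; exists e.
pose e' i := if i == size s then v else e i.
by exists e'; rewrite (sumE e') /e' eqxx; congr (_ + _); apply: eq_bigr => i _;
  rewrite (ltn_eqF (ltn_ord i)).
Qed.

Lemma ideal_gen_rconsl s c u : ideal_gen s u -> ideal_gen (rcons s c) u.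
Proof. by move=> Iu; apply/ideal_gen_rcons; exists u, 0; rewrite mulr0 addr0. Qed.

Lemma ideal_gen_rconsr s c : ideal_gen (rcons s c) c.
Proof.
by apply/ideal_gen_rcons; exists 0, 1; rewrite add0r mulr1; split=> //; apply: ideal_gen0.
Qed.

Lemma ideal_gen_ffun_rcons (I : finType) s c (f : {ffun I -> A}) :
  (forall i, ideal_gen (rcons s c) (f i)) ->
  exists u v : {ffun I -> A}, (forall i, ideal_gen s (u i)) /\ f = u + [ffun i => c * v i].
Proof.
move=> If; have /fin_all_exists[g Ig] i : exists p : A * A,
    ideal_gen s p.1 /\ f i = p.1 + c * p.2.
  by have [w [v []]] := (ideal_gen_rcons _ _ _).1 (If i); exists (w, v).
exists [ffun i => (g i).1], [ffun i => (g i).2]; split.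
  by move=> i; rewrite ffunE; case: (Ig i).
by apply/ffunP => i; rewrite !ffunE; case: (Ig i).
Qed.

End IdealGen.

Section Koszul.
Variables (A : comNzRingType) (N : nat) (b : 'I_N -> A).
Local Notation chain := {ffun {set 'I_N} -> A}.
Implicit Types (s x : seq A) (c u v : A) (w z : chain) (T : {set 'I_N}).

Definition ksign T (j : 'I_N) : A := (-1) ^+ #|[set i in T | (i < j)%N]|.

Lemma ksign_sqr T j : ksign T j * ksign T j = 1.
Proof. by rewrite /ksign -exprD -signr_odd oddD addbb. Qed.

Lemma ksignU1 k T j : k \notin T ->
  ksign (k |: T) j = (if (k < j)%N then -1 else 1) * ksign T j.
Proof.
move=> kT; rewrite /ksign.
have -> : [set i in k |: T | (i < j)%N] =
    if (k < j)%N then k |: [set i in T | (i < j)%N] else [set i in T | (i < j)%N].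
  by case kj: (k < j)%N; apply/setP => i; rewrite !inE;
    case: eqVneq => [->|] /=; rewrite ?kj ?(negbTE kT) ?andbF.
by case: (k < j)%N; rewrite ?mul1r // cardsU1 inE (negbTE kT) exprS.
Qed.

Lemma kdiffE w T : kdiff b w T = \sum_(j | j \notin T) ksign T j * b j * w (j |: T).
Proof. by rewrite ffunE. Qed.

Lemma kdiffD w z : kdiff b (w + z) = kdiff b w + kdiff b z.
Proof.
apply/ffunP => T; rewrite [RHS]ffunE !kdiffE -big_split.
by apply: eq_bigr => j _; rewrite ffunE mulrDr.
Qed.

Lemma kdiffN w : kdiff b (- w) = - kdiff b w.
Proof.
apply/ffunP => T; rewrite [RHS]ffunE !kdiffE -sumrN.
by apply: eq_bigr => j _; rewrite ffunE mulrN.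
Qed.

Lemma kdiffB w z : kdiff b (w - z) = kdiff b w - kdiff b z.
Proof. by rewrite kdiffD kdiffN. Qed.

Lemma kdiff0 : kdiff b (0 : chain) = 0.
Proof. by apply/ffunP => T; rewrite [RHS]ffunE kdiffE big1 // => j _; rewrite ffunE mulr0. Qed.

Lemma kdiffZ v w : kdiff b (kscale v w) = kscale v (kdiff b w).
Proof.
apply/ffunP => T; rewrite [RHS]ffunE !kdiffE mulr_sumr.
by apply: eq_bigr => j _; rewrite ffunE; ring.
Qed.

Lemma kdiffK w : kdiff b (kdiff b w) = 0.
Proof.
apply/ffunP => T; rewrite [RHS]ffunE kdiffE.
pose F j k := if [&& j \notin T, k \notin T & j != k] then
  ksign T j * b j * (ksign (j |: T) k * b k * w (k |: (j |: T))) else 0.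
transitivity (\sum_j \sum_k F j k).
  rewrite big_mkcond; apply: eq_bigr => j _.
  case jT: (j \notin T) => /=; last by rewrite big1 // => k _; rewrite /F jT.
  rewrite kdiffE mulr_sumr big_mkcond; apply: eq_bigr => k _.
  rewrite /F jT in_setU1 negb_or [k == j]eq_sym.
  by case: (k \notin T); case: (j != k).
apply: sumr_antisym => [j k|j]; last by rewrite /F eqxx !andbF.
rewrite /F; case jT: (j \notin T); case kT: (k \notin T); rewrite /= ?addr0 //.
case: (eqVneq j k) => [->|/negPf neq_jk]; first by rewrite addr0.
rewrite /= !ksignU1 // setUCA.
by case: ltngtP neq_jk => [| |/val_inj ->]; rewrite ?eqxx // => _ _; ring.
Qed.

Lemma kdiff_ideal s w : (forall T, ideal_gen s (w T)) ->
  forall T, ideal_gen s (kdiff b w T).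
Proof. by move=> Iw T; rewrite kdiffE; apply: ideal_gen_sum => j _; apply: ideal_genMl. Qed.

Lemma chainDE w z T : (w + z) T = w T + z T.
Proof. by rewrite !ffunE. Qed.

Lemma chainBE w z T : (w - z) T = w T - z T.
Proof. by rewrite !ffunE. Qed.

Lemma kscaleE v w T : kscale v w T = v * w T.
Proof. exact: ffunE. Qed.

Lemma kchainD k w z : kchain k w -> kchain k z -> kchain k (w + z).
Proof. by move=> cw cz T kT; rewrite ffunE cw // cz // addr0. Qed.

Lemma kchainN k w : kchain k w -> kchain k (- w).
Proof. by move=> cw T kT; rewrite ffunE cw // oppr0. Qed.

Lemma kchainB k w z : kchain k w -> kchain k z -> kchain k (w - z).
Proof. by move=> cw cz; apply: kchainD => //; apply: kchainN. Qed.

Lemma kchainZ k v w : kchain k w -> kchain k (kscale v w).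
Proof. by move=> cw T kT; rewrite ffunE cw // mulr0. Qed.

Lemma kchain_kdiff k w : kchain k.+1 w -> kchain k (kdiff b w).
Proof.
by move=> cw T kT; rewrite kdiffE big1 // => j jT; rewrite cw ?mulr0 // cardsU1 jT.
Qed.

Lemma kchain_gt k w : (N < k)%N -> kchain k w -> w = 0.
Proof.
move=> ltNk cw; apply/ffunP => T; rewrite ffunE cw //.
apply: contraTneq ltNk => <-; rewrite -leqNgt.
by rewrite (leq_trans (subset_leq_card (subsetT T))) // cardsT card_ord.
Qed.

Definition kres (k : nat) w : chain := [ffun T : {set 'I_N} => if #|T| == k then w T else 0].

Lemma kchain_kres k w : kchain k (kres k w).
Proof. by move=> T kT; rewrite ffunE (negbTE kT). Qed.

Lemma kdiff_kres k w : kdiff b (kres k.+1 w) = kres k (kdiff b w).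
Proof.
apply/ffunP => T; rewrite [RHS]ffunE !kdiffE; case: eqVneq => [kT|kT].
  by apply: eq_bigr => j jT; rewrite ffunE cardsU1 jT kT eqxx.
by rewrite big1 // => j jT; rewrite ffunE cardsU1 jT add1n eqSS (negbTE kT) mulr0.
Qed.

Lemma kres_id k w : kchain k w -> kres k w = w.
Proof. by move=> cw; apply/ffunP => T; rewrite ffunE; case: eqVneq => // /cw ->. Qed.

(* Contraction with the k-th basis vector of the dual; [kcontract k] is a
   homotopy from multiplication by [b k] to zero. *)
Definition kcontract (k : 'I_N) w : chain :=
  [ffun T : {set 'I_N} => if k \in T then ksign (T :\ k) k * w (T :\ k) else 0].

Lemma kchain_kcontract k j w : kchain k w -> kchain k.+1 (kcontract j w).
Proof.
move=> cw T kT; rewrite ffunE; case: ifP => // jT; rewrite cw ?mulr0 //.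
by apply: contra kT => /eqP cardT; rewrite (cardsD1 j T) jT cardT.
Qed.

Lemma kdiff_kcontract k w T :
  kdiff b (kcontract k w) T + kcontract k (kdiff b w) T = b k * w T.
Proof.
rewrite kdiffE [kcontract k _ T]ffunE.
have [kT|kT] := boolP (k \in T); last first.
  rewrite addr0 (bigD1 k) //= big1 ?addr0.
    by rewrite ffunE setU11 setU1K // -[RHS]mul1r -(ksign_sqr T k); ring.
  move=> j /andP[_ neq_jk]; rewrite ffunE in_setU1 eq_sym (negbTE neq_jk) /=.
  by rewrite (negbTE kT) mulr0.
rewrite kdiffE [X in ksign _ _ * X](bigD1 k) ?setD11 //= setD1K // mulrDr.
rewrite [ksign _ _ * (ksign _ _ * _ * _)]mulrA mulrA ksign_sqr mul1r addrCA -[RHS]addr0.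
congr (_ + _); rewrite mulr_sumr [X in _ + X](eq_bigl (fun j => j \notin T)); last first.
  by move=> j; rewrite in_setD1 negb_and negbK; case: eqVneq => [->|] /=; rewrite ?kT ?andbT.
rewrite -big_split /=; apply: big1 => j jT; rewrite ffunE setU1r //.
have neq_jk : j != k by apply: contraNneq jT => ->.
have jTk : j \notin T :\ k by rewrite in_setD1 (negbTE jT) andbF.
have -> : (j |: T) :\ k = j |: (T :\ k).
  by apply/setP => i; rewrite !inE; case: (eqVneq i j) => [->|] /=; rewrite ?neq_jk ?andbT.
rewrite ksignU1 // -{1}(setD1K kT) ksignU1 ?setD11 //.
by case: ltngtP neq_jk => [| |/val_inj ->]; rewrite ?eqxx // => _ _; ring.
Qed.

Definition in_span c := exists e : 'I_N -> A, c = \sum_k e k * b k.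

Lemma mul_span_kboundary s c k w : in_span c -> kchain k w ->
    (forall T, ideal_gen s (kdiff b w T)) ->
  exists2 z, kchain k.+1 z & forall T, ideal_gen s (c * w T - kdiff b z T).
Proof.
case=> e -> cw Idw; exists [ffun T => \sum_l e l * kcontract l w T].
  by move=> T kT; rewrite ffunE big1 // => l _; rewrite (kchain_kcontract l cw) ?mulr0.
move=> T; have -> : kdiff b [ffun T => \sum_l e l * kcontract l w T] T =
    \sum_l e l * kdiff b (kcontract l w) T.
  rewrite kdiffE (eq_bigr (fun j => \sum_l e l * (ksign T j * b j * kcontract l w (j |: T)))).
    by rewrite exchange_big; apply: eq_bigr => l _; rewrite kdiffE mulr_sumr.
  by move=> j _; rewrite ffunE mulr_sumr; apply: eq_bigr => l _; ring.
rewrite mulr_suml -sumrB; apply: ideal_gen_sum => l _.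
rewrite -mulrA -(kdiff_kcontract l w T) mulrDr addrAC subrr add0r.
by apply: ideal_genMl; rewrite ffunE; case: ifP => _; [apply: ideal_genMl | apply: ideal_gen0].
Qed.

(* Cycles and boundaries of the Koszul complex K(b; A/(s)), represented by
   chains over A. *)
Definition rcycle s k w := kchain k w /\ forall T, ideal_gen s (kdiff b w T).

Definition rboundary s k w :=
  exists2 z, kchain k.+1 z & forall T, ideal_gen s (w T - kdiff b z T).

Lemma cards_eqT T : (#|T| == N) = (T == setT).
Proof.
apply/eqP/eqP => [cardT|->]; last by rewrite cardsT card_ord.
by apply/eqP; rewrite eqEcard subsetT cardsT card_ord cardT /=.
Qed.

Definition ktop u : chain := [ffun T => if T == setT then u else 0].

Lemma rcycle_top s w : rcycle s N w -> forall k, ideal_gen s (b k * w setT).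
Proof.
case=> cw Idw k; have := Idw (setT :\ k); rewrite kdiffE (bigD1 k) ?setD11 //=.
rewrite big1 ?addr0 => [|j /andP[]]; last first.
  by rewrite in_setD1 in_setT andbT negbK => /eqP ->; rewrite eqxx.
rewrite setD1K ?in_setT // -mulrA => /(ideal_genMl (ksign (setT :\ k) k)).
by rewrite mulrA ksign_sqr mul1r.
Qed.

Lemma rcycle_ktop s u : (forall k, ideal_gen s (b k * u)) -> rcycle s N (ktop u).
Proof.
move=> Iu; split=> [T|T]; first by rewrite ffunE -cards_eqT => /negbTE ->.
rewrite kdiffE; apply: ideal_gen_sum => j _; rewrite ffunE.
by case: ifP => _; [rewrite -mulrA; apply: ideal_genMl | rewrite mulr0; apply: ideal_gen0].
Qed.

Lemma rboundary_top s w : rboundary s N w -> ideal_gen s (w setT).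
Proof. by case=> z /(kchain_gt (ltnSn N)) -> /(_ setT); rewrite kdiff0 ffunE subr0. Qed.

Lemma rboundary_of_top s w : kchain N w -> ideal_gen s (w setT) -> rboundary s N w.
Proof.
move=> cw Iw; exists 0 => [T _|T]; rewrite ?kdiff0 ffunE ?subr0 //.
by have [->|/negbTE nT] := eqVneq T setT; rewrite // cw ?cards_eqT ?nT //; apply: ideal_gen0.
Qed.

Lemma rcycle_nil k w : kcycle b k w -> rcycle [::] k w.
Proof. by case=> cw dw; split=> // T; rewrite dw ffunE; apply: ideal_gen0. Qed.

Lemma rboundary_nil k w : rboundary [::] k w <-> kboundary b k w.
Proof.
split=> [[z cz Iz]|[z [cz ->]]]; last first.
  by exists z => // T; rewrite subrr; apply: ideal_gen0.
exists z; split=> //; apply/ffunP => T.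
by move/ideal_gen_nil/eqP: (Iz T); rewrite subr_eq0 => /eqP.
Qed.

(* Regularity without the properness condition [~ ideal_gen s 1]. *)
Definition regular_seq x :=
  forall i, (i < size x)%N -> forall c,
    ideal_gen (take i x) (x`_i * c) -> ideal_gen (take i x) c.

Lemma rcycle_rcons_split s c k w :
    (forall u, ideal_gen s (c * u) -> ideal_gen s u) ->
    rcycle (rcons s c) k.+1 w ->
  exists2 v, rcycle s k v & forall T, ideal_gen s (kdiff b w T - c * v T).
Proof.
move=> c_reg [cw /ideal_gen_ffun_rcons[u [v [Iu dw]]]].
have Iu' : forall T, ideal_gen s (kres k u T).
  by move=> T; rewrite ffunE; case: ifP => _; [apply: Iu | apply: ideal_gen0].
have dwE : kdiff b w = kres k u + kscale c (kres k v).
  rewrite -(kres_id (kchain_kdiff cw)) dw; apply/ffunP => T.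
  by rewrite !ffunE; case: ifP => _; rewrite ?mulr0 ?addr0.
exists (kres k v); last by move=> T; rewrite dwE chainDE kscaleE addrK.
split=> [|T]; first exact: kchain_kres.
apply: c_reg; have /eqP : kdiff b (kdiff b w) T = 0 by rewrite kdiffK ffunE.
rewrite dwE kdiffD kdiffZ chainDE kscaleE addrC addr_eq0 => /eqP ->.
exact/ideal_genN/kdiff_ideal.
Qed.

Section Regular.
Variable x : seq A.
Hypothesis x_span : forall i, (i < size x)%N -> in_span x`_i.
Hypothesis x_reg : regular_seq x.

Lemma rcycle_mul_span i k w : (i < size x)%N -> rcycle (take i x) k w ->
  exists2 z, rcycle (take i.+1 x) k.+1 z &
    forall T, ideal_gen (take i x) (x`_i * w T - kdiff b z T).
Proof.
move=> ltix [cw Idw]; have [z cz Iz] := mul_span_kboundary (x_span ltix) cw Idw.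
exists z => //; split=> // T; rewrite (take_nth 0 ltix).
rewrite -[kdiff b z T](subKr (x`_i * w T)).
apply: ideal_genB; last exact: ideal_gen_rconsl.
exact/ideal_genMr/ideal_gen_rconsr.
Qed.

Lemma rboundary_lift i k w z : (i < size x)%N -> kchain k w ->
    (forall T, ideal_gen (take i x) (x`_i * w T - kdiff b z T)) ->
  rboundary (take i.+1 x) k.+1 z -> rboundary (take i x) k w.
Proof.
move=> ltix cw Iz [e _ Ie].
have /ideal_gen_ffun_rcons[u [v [Iu def_z]]] :
    forall T, ideal_gen (rcons (take i x) x`_i) ((z - kdiff b e) T).
  by move=> T; rewrite -(take_nth 0 ltix) chainBE; apply: Ie.
have dz : kdiff b z = kdiff b u + kscale x`_i (kdiff b v).
  by rewrite -kdiffZ -kdiffD -def_z kdiffB kdiffK subr0.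
exists (kres k.+1 v); first exact: kchain_kres.
move=> T; rewrite kdiff_kres ffunE; case: eqVneq => kT; last first.
  by rewrite cw // subrr; apply: ideal_gen0.
apply: x_reg => //; rewrite mulrBr.
have -> : x`_i * kdiff b v T = kdiff b z T - kdiff b u T.
  by rewrite dz chainDE kscaleE addrAC subrr add0r.
by rewrite opprB addrA addrAC; apply: ideal_genD; [apply: Iz | apply: kdiff_ideal].
Qed.

(* Depth sensitivity of Koszul homology. *)
Lemma rcycle_rboundary i k w : (i <= size x)%N -> (N < k + (size x - i))%N ->
  rcycle (take i x) k w -> rboundary (take i x) k w.
Proof.
move def_r : (size x - i)%N => r; elim: r i k w def_r => [|r IHr] i k w def_r le_ix.
  rewrite addn0 => ltNk [cw _]; rewrite (kchain_gt ltNk cw).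
  by exists 0 => [T _|T]; rewrite ?kdiff0 !ffunE ?subrr //; apply: ideal_gen0.
move=> ltNk [cw Idw].
have ltix : (i < size x)%N by rewrite -subn_gt0 def_r.
have [z zcyc Iz] := rcycle_mul_span ltix (conj cw Idw).
apply: rboundary_lift ltix cw Iz (IHr _ _ _ _ ltix _ zcyc); first by rewrite subnS def_r.
by rewrite addSnnS.
Qed.


Lemma size_regular_seq : ~ in_span 1 -> (size x <= N)%N.
Proof.
move=> not_span1; rewrite leqNgt; apply/negP => ltNx.
pose w0 : chain := [ffun T => if T == set0 then 1 else 0].
have w0cyc : rcycle (take 0 x) 0 w0.
  split=> [T|T]; first by rewrite /w0 ffunE; have [->|] := eqVneq T set0; rewrite ?cards0.
  rewrite kdiffE big1 => [|j _]; first exact: ideal_gen0.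
  have /negbTE nT0 : j |: T != set0 by apply/set0Pn; exists j; rewrite setU11.
  by rewrite /w0 ffunE nT0 mulr0.
have ltNx0 : (N < 0 + (size x - 0))%N by rewrite add0n subn0.
have [z _ /(_ set0)] := rcycle_rboundary (leq0n _) ltNx0 w0cyc.
rewrite take0 ideal_gen_nil /w0 ffunE eqxx => /eqP.
rewrite subr_eq0 kdiffE => /eqP span1; apply: not_span1.
exists (fun j => ksign set0 j * z (j |: set0)).
by rewrite span1 big_mkcond; apply: eq_bigr => j _; rewrite in_set0 /=; ring.
Qed.

Lemma rboundary_mul_transfer i j c w z : (i < size x)%N ->
    (N < j.+1 + (size x - i))%N -> kchain j.+1 z ->
    (forall T, ideal_gen (take i x) (x`_i * w T - kdiff b z T)) ->
  rboundary (take i x) j (kscale c w) -> rboundary (take i.+1 x) j.+1 (kscale c z).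
Proof.
move=> ltix ltNj cz Iz [p cp Ip]; pose e := kscale c z - kscale x`_i p.
have ecyc : rcycle (take i x) j.+1 e.
  split=> [|T]; first by apply: kchainB; apply: kchainZ.
  rewrite kdiffB !kdiffZ chainBE !kscaleE.
  have -> : c * kdiff b z T - x`_i * kdiff b p T =
      x`_i * (kscale c w T - kdiff b p T) - c * (x`_i * w T - kdiff b z T).
    by rewrite kscaleE; ring.
  by apply: ideal_genB; apply: ideal_genMl.
have [q cq Iq] := rcycle_rboundary (ltnW ltix) ltNj ecyc.
exists q => // T; rewrite (take_nth 0 ltix).
have -> : kscale c z T - kdiff b q T = e T - kdiff b q T + x`_i * p T.
  by rewrite chainBE !kscaleE; ring.
by apply: ideal_genD; [apply: ideal_gen_rconsl | apply/ideal_genMr/ideal_gen_rconsr].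
Qed.

End Regular.

Section Grade.
Variables x y : seq A.
Hypothesis x_span : forall i, (i < size x)%N -> in_span x`_i.
Hypothesis x_reg : regular_seq x.
Hypothesis y_span : forall i, (i < size y)%N -> in_span y`_i.
Hypothesis y_reg : regular_seq y.
Hypothesis size_y : size y = (size x).+1.
Hypothesis size_x : (size x <= N)%N.

(* For i = 0 this is depth sensitivity for y; each step is the long exact
   sequence of 0 -> A/(x_<i) -x_i-> A/(x_<i) -> A/(x_<=i) -> 0. *)
Lemma rcycle_rboundary_grade i w : (i <= size x)%N ->
  rcycle (take i x) (N - size x + i) w -> rboundary (take i x) (N - size x + i) w.
Proof.
elim: i w => [|i IHi] w le_ix.
  rewrite !take0 -(take0 y); apply: rcycle_rboundary => //; lia.
set j := (N - size x + i)%N; rewrite addnS (take_nth 0 le_ix) => wcyc.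
have [v vcyc Iv] := rcycle_rcons_split (x_reg le_ix) wcyc.
have [e ce Ie] := IHi v (ltnW le_ix) vcyc.
pose zeta := w - kscale x`_i e.
have zcyc : rcycle (take i x) j.+1 zeta.
  split; first by apply: kchainB (kchainZ _ ce); case: wcyc.
  move=> T; rewrite kdiffB kdiffZ chainBE kscaleE.
  rewrite -[kdiff b w T](subrK (x`_i * v T)) -addrA -mulrBr.
  by apply: ideal_genD; [apply: Iv | apply: ideal_genMl].
have ltNj : (N < j.+1 + (size x - i))%N by rewrite /j; lia.
have [q cq Iq] := rcycle_rboundary x_span x_reg (ltnW le_ix) ltNj zcyc.
exists q => // T; have -> : w T - kdiff b q T = zeta T - kdiff b q T + x`_i * e T.
  by rewrite chainBE kscaleE; ring.
by apply: ideal_genD; [apply: ideal_gen_rconsl | apply/ideal_genMr/ideal_gen_rconsr].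
Qed.

Lemma ideal_gen_colon_span u : (forall k, ideal_gen x (b k * u)) -> ideal_gen x u.
Proof.
move=> Iu; have := rcycle_rboundary_grade (leqnn (size x)) (w := ktop u).
rewrite take_size subnK // => /(_ (rcycle_ktop Iu))/rboundary_top.
by rewrite ffunE eqxx.
Qed.

End Grade.

Section Torsion.
Variables (x : seq A) (P : A -> Prop).
Hypothesis x_span : forall i, (i < size x)%N -> in_span x`_i.
Hypothesis x_reg : regular_seq x.
Hypothesis size_x : (size x <= N)%N.
Hypothesis x_colon : forall u, (forall k, ideal_gen x (b k * u)) ->
  (forall c, P c -> ideal_gen x (c * u)) -> ideal_gen x u.

(* Descend along the injections H_j(b; A/(x_<i)) -> H_(j+1)(b; A/(x_<=i))
   induced by x_i up to the top degree N, where [x_colon] applies. *)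
Lemma rboundary_of_torsion i w : (i <= size x)%N ->
    rcycle (take i x) (N - size x + i) w ->
    (forall c, P c -> rboundary (take i x) (N - size x + i) (kscale c w)) ->
  rboundary (take i x) (N - size x + i) w.
Proof.
move def_r : (size x - i)%N => r; elim: r i w def_r => [|r IHr] i w def_r le_ix.
  have -> : i = size x by apply/eqP; rewrite eqn_leq le_ix -subn_eq0 def_r.
  rewrite take_size subnK // => wcyc w_tors.
  apply: rboundary_of_top; first by case: wcyc.
  apply: x_colon => [|c /w_tors/rboundary_top]; first exact: rcycle_top.
  by rewrite kscaleE.
move=> wcyc w_tors; have ltix : (i < size x)%N by rewrite -subn_gt0 def_r.
have [z zcyc Iz] := rcycle_mul_span x_span ltix wcyc.
have ltNj : (N < (N - size x + i).+1 + (size x - i))%N by lia.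
apply: (rboundary_lift x_reg ltix (proj1 wcyc) Iz); rewrite -addnS.
apply: IHr => //; rewrite ?subnS ?def_r ?addnS // => c /w_tors.
exact: (rboundary_mul_transfer x_span x_reg ltix ltNj (proj1 zcyc) Iz).
Qed.

End Torsion.
End Koszul.

Section Catenation.
Variable A : comNzRingType.

Lemma ideal_gen_enum n (a : 'I_n -> A) c :
  ideal_gen (map a (enum 'I_n)) c <-> in_span a c.
Proof.
have size_a : size (map a (enum 'I_n)) = n by rewrite size_map size_enum_ord.
have nthE (i : 'I_n) : (map a (enum 'I_n))`_i = a i.
  by rewrite (nth_map i) ?size_enum_ord // nth_ord_enum.
split=> [[e ->]|[e ->]].
  by rewrite size_a; exists (fun i => e i); apply: eq_bigr => i _; rewrite nthE.
exists (fun i => if insub i is Some j then e j else 0); rewrite size_a.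
by apply: eq_bigr => i _; rewrite nthE valK.
Qed.

Definition catf n (a : 'I_n -> A) (s : seq A) (l : 'I_(n + size s)) : A :=
  match split l with inl i => a i | inr i => s`_i end.
Arguments catf {n} a s l.

Lemma in_span_catl n (a : 'I_n -> A) s c : in_span a c -> in_span (catf a s) c.
Proof.
case=> e ->; exists (fun l => if split l is inl i then e i else 0).
rewrite big_split_ord /= [X in _ + X]big1 ?addr0 => [|i _]; last first.
  by rewrite /catf (unsplitK (inr _ i)) mul0r.
by apply: eq_bigr => i _; rewrite /catf (unsplitK (inl _ i)).
Qed.

Lemma in_span_catr n (a : 'I_n -> A) s i : (i < size s)%N -> in_span (catf a s) s`_i.
Proof.
move=> lt_is; pose l0 := rshift n (Ordinal lt_is).
exists (fun l => if l == l0 then 1 else 0).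
rewrite (bigD1 l0) //= eqxx mul1r big1 ?addr0 => [|l /negbTE -> ]; last by rewrite mul0r.
by rewrite /catf (unsplitK (inr _ _)).
Qed.

(* Induction on t, applying [ideal_gen_colon_span] to the sequence (a, y),
   whose span contains both x and y. *)
Lemma ideal_gen_colon_pow n (a : 'I_n -> A) (P : A -> Prop) x y t u :
    (forall i, (i < size x)%N -> in_span a x`_i) -> regular_seq x ->
    (forall i, (i < size y)%N -> P y`_i) -> regular_seq y ->
    size y = (size x).+1 ->
    (forall k, ideal_gen x (a k * u)) ->
    (forall c, ideal_pow P t c -> ideal_gen x (c * u)) ->
  ideal_gen x u.
Proof.
move=> x_span x_reg y_P y_reg size_y.
have le_x : (size x <= n + size y)%N by rewrite size_y; lia.
have colon := ideal_gen_colon_span (b := catf a y)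
  (fun i lt_ix => in_span_catl y (x_span i lt_ix)) x_reg
  (fun i lt_iy => in_span_catr a lt_iy) y_reg size_y le_x.
elim: t u => [|t IHt] u a_u P_u; first by rewrite -[u]mul1r; apply: P_u.
apply: IHt => // c Pc; apply: colon => l; rewrite /catf; case: split => i.
  by rewrite mulrCA; apply/ideal_genMl/a_u.
rewrite mulrA; apply: P_u; exists 1%N, (fun _ => y`_i), (fun _ => c).
by split=> [_|]; [apply: y_P | rewrite big_ord1].
Qed.
End Catenation.

Unset Implicit Arguments.
Theorem mainTheorem8 (A : comNzRingType) (G : nat -> A -> Prop)
  (HG : is_Ngrading G) (Hnoeth : noetherian A)
  (n : nat) (a : 'I_n -> A) (d : nat)
  (Hd : grade_eq (ideal_gen (map a (enum 'I_n))) d)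
  (Hdepth : grade_ge (Aplus G) d.+1) :
  forall x : {ffun {set 'I_n} -> A},
    kcycle a (n - d) x ->
    (exists t : nat, forall y, ideal_pow (Aplus G) t y ->
        kboundary a (n - d) (kscale y x)) ->
    kboundary a (n - d) x.
Proof.
move=> w wcyc [t w_tors].
have [I_ne1 [[x [size_x [x_I [x_reg _]]]] _]] := Hd.
have [y [size_y [y_m [y_reg _]]]] := Hdepth.
have x_span i (lt_ix : (i < size x)%N) : in_span a x`_i by apply/ideal_gen_enum/x_I.
have le_xn : (size x <= n)%N.
  by apply: (size_regular_seq x_span x_reg) => /ideal_gen_enum.
have colon u : (forall k, ideal_gen x (a k * u)) ->
    (forall c, ideal_pow (Aplus G) t c -> ideal_gen x (c * u)) -> ideal_gen x u.
  by apply: (ideal_gen_colon_pow x_span x_reg y_m y_reg); rewrite size_y size_x.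
apply/rboundary_nil; have := rboundary_of_torsion x_span x_reg le_xn colon (leq0n _).
rewrite take0 size_x addn0; apply; first exact: rcycle_nil.
by move=> c /w_tors/rboundary_nil.
Qed.
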